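(* Assume Assumption 1, Assumption 2 and the null hypothesis $H_0:\ T_i(1)=T_i(0)$ for all $i$, and condition on $\boldsymbol{T}(1),\boldsymbol{T}(0)$. Then $$\mathbb{E}\{U\mid\boldsymbol{T}(1),\boldsymbol{T}(0)\}\ \ge\ p_1p_0\Big(\frac{n}{\tilde d+1}\cdot\frac1n\sum_{i=1}^n\tilde G(T_i(0))-1\Big)=p_1p_0\Big(\frac{n\tilde g}{\tilde d+1}-1\Big).$$
   Context: There are $n$ units. Unit $i$ has potential event times $T_i(1),T_i(0)\ge 0$, potential censoring times $C_i(1),C_i(0)\in[0,\infty]$, and treatment indicator $Z_i\in\{0,1\}$; bold letters denote $n$-vectors. Assumption 1: conditional on $\boldsymbol{T}(1),\boldsymbol{T}(0),\boldsymbol{C}(1),\boldsymbol{C}(0)$, the $Z_i$ are i.i.d. Bernoulli$(p_1)$, $p_1=1-p_0\in(0,1)$. Assumption 2: $(\boldsymbol{C}(1),\boldsymbol{C}(0))$ is independent of $(\boldsymbol{T}(1),\boldsymbol{T}(0))$ and the pairs $(C_i(1),C_i(0))$ are i.i.d. across $i$. $G_z(c)=\Pr(C_i(z)\ge c)$, $\tilde G(t)=G_1(t)G_0(t)$. Realized: $W_i=\min\{T_i,C_i\}$, $\Delta_i=\mathbb{1}(T_i\le C_i)$ with $T_i=Z_iT_i(1)+(1-Z_i)T_i(0)$, $C_i=Z_iC_i(1)+(1-Z_i)C_i(0)$. Let $t_1<\dots<t_K$ be the distinct values of $\{T_i(0)\}$, $d_k=\#\{i:T_i(0)=t_k\}$,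 $\tilde d=\max_kd_k$, $\tilde g=n^{-1}\sum_i\tilde G(T_i(0))$. For $1\le k\le K$: $N_{1k},N_{0k}$ the numbers of treated / control units with $W_i\ge t_k$, $N_k=N_{1k}+N_{0k}$, $D_k=\sum_i\Delta_i\mathbb{1}(W_i=t_k)$, $V_k=D_k(N_k-D_k)N_{1k}N_{0k}/\{N_k^2(N_k-1)\}$ (convention $0/0:=0$), $U=\sum_{k=1}^KV_k$. *)

From HB Require Import structures.
From mathcomp Require Import all_boot all_order all_algebra.
From mathcomp Require Import all_classical all_reals all_analysis.
From mathcomp Require Import measurable_realfun lebesgue_measure lebesgue_integral.
Set Implicit Arguments. Unset Strict Implicit. Unset Printing Implicit Defensive.
Import Order.TTheory GRing.Theory Num.Theory.
Local Open Scope ring_scope.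
Local Open Scope classical_set_scope.

(* The log-rank variance statistic U = \sum_k V_k, as a function of the
   (fixed) potential event times T1 T0, the realized treatment vector z and
   the realized potential censoring times c1 c0 (values in [0, +oo]). *)
Definition logrank_U (R : realType) (n : nat) (T1 T0 : 'I_n -> R)
    (z : 'I_n -> bool) (c1 c0 : 'I_n -> \bar R) : R :=
  let T i := if z i then T1 i else T0 i in
  let C i := if z i then c1 i else c0 i in
  let W i := Order.min ((T i)%:E) (C i) in
  let Dl i := ((T i)%:E <= C i)%E in
  \sum_(tk <- undup [seq T0 i | i <- enum 'I_n])
    (let N1 : R := (#|[set i | z i && (tk%:E <= W i)%E]|)%:R in
     let N0 : R := (#|[set i | ~~ z i && (tk%:E <= W i)%E]|)%:R in
     let N := N1 + N0 in
     let D : R := (#|[set i | Dl i && (W i == tk%:E)]|)%:R in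
     (* division by 0 yields 0 in MathComp, matching the convention 0/0 := 0 *)
     D * (N - D) * N1 * N0 / (N ^+ 2 * (N - 1))).

(* G_z(c) = Pr(C_i(z) >= c), where mu is the common law of (C_i(1), C_i(0)). *)
Definition Gcens (R : realType) (mu : probability (\bar R * \bar R)%type R)
    (z : bool) (c : R) : R :=
  fine (mu [set p | (c%:E <= (if z then p.1 else p.2))%E]).

Definition Gtilde (R : realType) (mu : probability (\bar R * \bar R)%type R)
    (c : R) : R := Gcens mu true c * Gcens mu false c.

Definition dtilde (R : realType) (n : nat) (T0 : 'I_n -> R) : nat :=
  \max_(i < n) #|[set j | T0 j == T0 i]|.

Definition gtilde (R : realType) (n : nat) (mu : probability (\bar R * \bar R)%type R)
    (T0 : 'I_n -> R) : R :=
  n%:R^-1 * \sum_(i < n) Gtilde mu (T0 i).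

(* Under H0 the event times are fixed, so at a distinct time t the term V_t
   depends on the randomness only through the treatment labels b_i = Z_i and
   the indicators e_i = [t <= C_i] of not being censored before t, and the
   pairs (b_i, e_i) are i.i.d.  Given e, the labels of the N units at risk are
   i.i.d., equal to x with probability k_x, so E[N_1 N_0 | e] = k_1 k_0 (N^2 - N)
   and E[V_t | e] = k_1 k_0 D (N - D)/N.
   If some unit j has T_j(0) > t, then j is at risk but does not fail at t
   whenever e_j = 1, hence D (N - D)/N >= D e_j/(d~ + 1); averaging over e gives
   E[V_t] >= p_1 p_0 G~(t) d_t/(d~ + 1).  Summing over t gives
   p_1 p_0 n g~/(d~ + 1), up to the largest time, whose missing term is at most
   p_1 p_0. *)

From HB Require Import structures.
From mathcomp Require Import all_boot all_order all_algebra.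
From mathcomp Require Import all_classical all_reals all_analysis.
From mathcomp Require Import measurable_realfun lebesgue_measure lebesgue_integral.
From mathcomp Require Import ring lra.
Import Order.TTheory GRing.Theory Num.Theory.
Set Implicit Arguments. Unset Strict Implicit. Unset Printing Implicit Defensive.
Local Open Scope ring_scope.

Lemma natr_card_set (R : pzSemiRingType) (I : finType) (P : pred I) :
  #|[set i | P i]|%:R = \sum_i (P i)%:R :> R.
Proof.
rewrite -sum1_card natr_sum big_mkcond /=; apply: eq_bigr => i _.
by rewrite inE; case: (P i).
Qed.

Lemma sum_prod_ffun_pair (R : comPzSemiRingType) (I : finType) (F : I -> bool -> R)
    (g h : bool -> R) (i j : I) :
  (forall l, F l true + F l false = 1) -> i != j ->
  \sum_(f : {ffun I -> bool}) (\prod_l F l (f l)) * (g (f i) * h (f j)) =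
  (F i true * g true + F i false * g false) * (F j true * h true + F j false * h false).
Proof.
move=> F1 ij.
pose G l x := F l x * ((if l == i then g x else 1) * (if l == j then h x else 1)).
have -> : \sum_(f : {ffun I -> bool}) (\prod_l F l (f l)) * (g (f i) * h (f j))
    = \sum_(f : {ffun I -> bool}) \prod_l G l (f l).
  apply: eq_bigr => f _; rewrite /G big_split /= big_split /=.
  by rewrite -!big_mkcond /= !big_pred1_eq.
rewrite -bigA_distr_bigA /= (bigD1 i) //= (bigD1 j) 1?eq_sym //=.
rewrite [X in _ * (_ * X)]big1 ?mulr1; last first.
  by move=> l /andP[/negbTE li /negbTE lj]; rewrite big_bool /G li lj !mulr1; exact: F1.
by rewrite !big_bool /G !eqxx (negbTE ij) eq_sym (negbTE ij) !mulr1 !mul1r.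
Qed.

Lemma sum_distinct_pairs (R : pzRingType) (I : finType) (A : {set I}) :
  \sum_i \sum_j ((i \in A) && (j \in A) && (i != j))%:R = #|A|%:R ^+ 2 - #|A|%:R :> R.
Proof.
transitivity (\sum_(i in A) (#|A|%:R - 1 : R)); last first.
  by rewrite sumr_const mulrnBl expr2 mulr_natr.
rewrite [RHS]big_mkcond; apply: eq_bigr => i _; case: ifP => iA /=.
  rewrite -natr_card_set (cardsD1 i A) iA natrD addrAC subrr add0r.
  by congr (_%:R); apply: eq_card => j; rewrite !inE andbC eq_sym.
by rewrite big1.
Qed.

Lemma ratio_failures_ge (R : realFieldType) (D N dd : nat) (ej : bool) :
  (D <= dd)%N -> (D + ej <= N)%N ->
  D%:R * ej%:R / (dd%:R + 1) <= D%:R * (N%:R - D%:R) / N%:R :> R.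
Proof.
move=> Ddd DN; have DN' : (D <= N)%N by apply: leq_trans DN; exact: leq_addr.
case: ej DN => /= DN; last first.
  by rewrite mulr0 mul0r divr_ge0 ?mulr_ge0 // subr_ge0 ler_nat.
have N0 : (0 < N)%N by apply: leq_trans DN; rewrite addn1.
rewrite mulr1 ler_pdivrMr ?ltr0n // mulrAC ler_pdivlMr ?ltr0n //.
rewrite -(ler_nat R) natrD in DN; rewrite -(ler_nat R) in Ddd.
have D0 : 0 <= D%:R :> R by [].
have dd0 : 0 <= dd%:R :> R by [].
(* D (N - D) (dd + 1) - D N = D (N - D - 1) dd + D (dd - D) *)
have h1 : 0 <= D%:R * ((N%:R - D%:R - 1) * dd%:R) :> R by rewrite !mulr_ge0 //; lra.
have h2 : 0 <= D%:R * (dd%:R - D%:R) :> R by rewrite mulr_ge0 //; lra.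
nra.
Qed.

Lemma bool_weight_disintegrate (R : realFieldType) (q : bool -> bool -> R) :
  (forall x y, 0 <= q x y) ->
  exists kap : bool -> bool -> R, [/\ forall x y, 0 <= kap x y,
    forall y, kap true y + kap false y = 1 &
    forall x y, q x y = (q true y + q false y) * kap x y].
Proof.
move=> q0; pose rho y := q true y + q false y.
have rho0 y : 0 <= rho y by rewrite addr_ge0.
(* If rho y = 0 any law will do; take the point mass at true. *)
exists (fun x y : bool => if rho y == 0 then (x%:R : R) else q x y / rho y); split.
- by move=> x y; case: eqP => _; [case: x | rewrite divr_ge0].
- by move=> y; case: eqP => [_|/eqP r0]; [rewrite addr0 | rewrite -mulrDl divff].
move=> x y; case: eqP => [r0|/eqP r0]; last by rewrite mulrC divfK.
move: r0; rewrite /rho => r0; rewrite r0 mul0r.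
by have := q0 true y; have := q0 false y; case: x => /=; lra.
Qed.

Lemma sum_undup_fibers (R : pzSemiRingType) (T : eqType) (I : finType) (f : I -> T)
    (F : T -> R) :
  \sum_(t <- undup [seq f i | i <- enum I]) #|[set i | f i == t]|%:R * F t =
  \sum_i F (f i).
Proof.
under eq_bigr do rewrite natr_card_set mulr_suml.
rewrite exchange_big /=; apply: eq_bigr => i _.
rewrite (eq_bigr (fun t => if t == f i then F (f i) else 0)); last first.
  by move=> t _; rewrite eq_sym; case: eqP => [->|]; rewrite ?mul1r ?mul0r.
rewrite -big_mkcond /= -big_filter filter_pred1_uniq ?undup_uniq ?big_seq1 //.
by rewrite mem_undup map_f ?mem_enum.
Qed.

Lemma sum_le_unique (R : numDomainType) (T : eqType) (L : seq T) (Q : pred T)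
    (a : T -> R) (M : R) :
  uniq L -> 0 <= M -> {in L &, forall x y, Q x -> Q y -> x = y} ->
  {in L, forall x, a x <= M} -> \sum_(x <- L | Q x) a x <= M.
Proof.
move=> Lu M0 Qu aM; rewrite -big_filter.
have : {subset [seq x <- L | Q x] <= [pred x | (x \in L) && Q x]}.
  by move=> x; rewrite mem_filter andbC.
move: (filter_uniq Q Lu); case: [seq x <- L | Q x] => [|x [|y s]] xys sub;
  rewrite ?big_nil ?big_seq1 //.
  by apply: aM; have /andP[] := sub x (mem_head _ _).
have /andP[xL Qx] := sub x (mem_head _ _).
have /andP[yL Qy] : (y \in L) && Q y by apply: sub; rewrite !inE eqxx orbT.
by move: xys; rewrite (Qu x y) // => /andP[]; rewrite inE eqxx.
Qed.

Lemma sum_sub_max_le (R : realDomainType) (L : seq R) (a S : R -> R) (M : R) :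
  uniq L -> 0 <= M -> {in L, forall t, a t <= M} -> {in L, forall t, 0 <= S t} ->
  {in L, forall t, has (fun s => t < s) L -> a t <= S t} ->
  \sum_(t <- L) a t - M <= \sum_(t <- L) S t.
Proof.
move=> Lu M0 aM S0 aS; pose nonmax t := has (fun s => t < s) L.
have max_le : \sum_(t <- L | ~~ nonmax t) a t <= M.
  apply: sum_le_unique => // x y xL yL /hasPn xmax /hasPn ymax.
  by apply/le_anti/andP; split; rewrite leNgt; [exact: ymax | exact: xmax].
have nonmax_le : \sum_(t <- L | nonmax t) a t <= \sum_(t <- L | nonmax t) S t.
  rewrite big_seq_cond [X in _ <= X]big_seq_cond.
  by apply: ler_sum => t /andP[tL]; exact: aS.
have S_le : \sum_(t <- L | nonmax t) S t <= \sum_(t <- L) S t.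
  rewrite [X in _ <= X](bigID nonmax) /= lerDl big_seq_cond.
  by apply: sumr_ge0 => t /andP[tL _]; exact: S0.
rewrite (bigID nonmax) /= -addrA; apply: le_trans S_le.
by rewrite -[X in _ <= X]addr0 lerD // subr_le0.
Qed.

Section LogrankTerm.
Variables (R : realFieldType) (n : nat) (T0 : 'I_n -> R) (t : R).
Implicit Types (b e : 'I_n -> bool).

Definition at_risk e : {set 'I_n} := [set i | (t <= T0 i) && e i].
Definition failures e : {set 'I_n} := [set i | (T0 i == t) && e i].

Definition logrank_weight e : R :=
  let N := #|at_risk e|%:R in let D := #|failures e|%:R in
  D * (N - D) / (N ^+ 2 * (N - 1)).

(* With b the treatment labels and e_i = [t <= C_i], this is the summand V_k
   of U at t_k = t under H0 (logrank_U_null). *)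
Definition logrank_term b e : R :=
  logrank_weight e *
  (#|[set i in at_risk e | b i]|%:R * #|[set i in at_risk e | ~~ b i]|%:R).

Lemma failures_subset e : failures e \subset at_risk e.
Proof. by apply/fintype.subsetP => i; rewrite !inE => /andP[/eqP -> ->]; rewrite lexx. Qed.

Lemma logrank_weight_mulE e :
  logrank_weight e * (#|at_risk e|%:R ^+ 2 - #|at_risk e|%:R) =
  #|failures e|%:R * (#|at_risk e|%:R - #|failures e|%:R) / #|at_risk e|%:R.
Proof.
rewrite /logrank_weight; have := subset_leq_card (failures_subset e).
move: #|failures e| #|at_risk e| => D [|[|N]] DN.
- by rewrite expr2 !(mulr0, mul0r, subrr, invr0).
- by case: D DN => [|[|]] //= _; rewrite ?mul0r // subrr !mulr0 !mul0r.
have N0 : 0 <= N%:R :> R by [].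
by field; rewrite !gt_eqF //; lra.
Qed.

Lemma logrank_weight_ge0 e : 0 <= logrank_weight e.
Proof.
rewrite /logrank_weight; have := subset_leq_card (failures_subset e).
move: #|failures e| #|at_risk e| => D [|N] DN; first by rewrite expr2 !mul0r invr0 mulr0.
by rewrite divr_ge0 ?mulr_ge0 ?subr_ge0 ?ler_nat ?ler1n.
Qed.

Lemma logrank_term_ge0 b e : 0 <= logrank_term b e.
Proof. by rewrite mulr_ge0 ?logrank_weight_ge0. Qed.

Lemma card_at_risk_split b e :
  (#|[set i in at_risk e | b i]| + #|[set i in at_risk e | ~~ b i]|)%N = #|at_risk e|.
Proof.
rewrite -(cardsID [set i | b i] (at_risk e)).
by congr addn; apply: eq_card => i; rewrite !inE andbC.
Qed.

Lemma logrank_weight_ge (dd : nat) e j : t < T0 j -> (#|failures e| <= dd)%N ->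
  #|failures e|%:R * (e j)%:R / (dd%:R + 1) <=
  logrank_weight e * (#|at_risk e|%:R ^+ 2 - #|at_risk e|%:R).
Proof.
move=> tj Ddd; rewrite logrank_weight_mulE; apply: ratio_failures_ge => //.
case ej: (e j); last by rewrite addn0 subset_leq_card ?failures_subset.
rewrite addn1; apply/proper_card/properP; split; first exact: failures_subset.
exists j; first by rewrite inE ej andbT ltW.
by rewrite inE ej andbT (gt_eqF tj).
Qed.

Lemma sum_labels_card_mul (kap : bool -> bool -> R) e :
  (forall y, kap true y + kap false y = 1) ->
  \sum_(b : {ffun 'I_n -> bool}) (\prod_l kap (b l) (e l)) *
    (#|[set i in at_risk e | b i]|%:R * #|[set i in at_risk e | ~~ b i]|%:R)
  = kap true true * kap false true * (#|at_risk e|%:R ^+ 2 - #|at_risk e|%:R).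
Proof.
move=> kap1; set A := at_risk e.
have eA i : i \in A -> e i by rewrite inE => /andP[].
have expand (b : {ffun 'I_n -> bool}) :
  (\prod_l kap (b l) (e l)) * (#|[set i in A | b i]|%:R * #|[set i in A | ~~ b i]|%:R)
  = \sum_i \sum_j (\prod_l kap (b l) (e l)) *
      (((i \in A) && b i)%:R * ((j \in A) && ~~ b j)%:R).
  rewrite !natr_card_set big_distrl big_distrr /=; apply: eq_bigr => i _.
  by rewrite !big_distrr.
have pair i j : \sum_(b : {ffun 'I_n -> bool}) (\prod_l kap (b l) (e l)) *
    (((i \in A) && b i)%:R * ((j \in A) && ~~ b j)%:R)
  = ((i \in A) && (j \in A) && (i != j))%:R * (kap true true * kap false true).
  have [<-|ij] := eqVneq i j.
    rewrite /= andbF mulr0n mul0r big1 // => b _.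
    by case: (b i); case: (i \in A); rewrite /= ?(mulr0n, mulr0, mul0r).
  rewrite (@sum_prod_ffun_pair _ _ (fun l x => kap x (e l)) (fun x => ((i \in A) && x)%:R)
     (fun x => ((j \in A) && ~~ x)%:R) i j (fun l => kap1 (e l)) ij) /=.
  case iA: (i \in A); case jA: (j \in A);
    rewrite /= ?(mulr0n, mulr1n, mulr0, mul0r, add0r, addr0, mulr1, mul1r) //.
  by rewrite !eA.
rewrite (eq_bigr _ (fun (b : {ffun 'I_n -> bool}) _ => expand b)) exchange_big /=.
under eq_bigr do rewrite exchange_big /=.
rewrite -sum_distinct_pairs mulr_sumr; apply: eq_bigr => i _.
rewrite mulr_sumr; apply: eq_bigr => j _; rewrite pair; exact: mulrC.
Qed.

Lemma sum_card_failures_mul (rho : bool -> R) j :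
  rho true + rho false = 1 -> t < T0 j ->
  \sum_(e : {ffun 'I_n -> bool}) (\prod_l rho (e l)) * (#|failures e|%:R * (e j)%:R)
  = #|[set i | T0 i == t]|%:R * rho true ^+ 2.
Proof.
move=> rho1 tj.
under eq_bigr do rewrite natr_card_set big_distrl big_distrr /=.
rewrite exchange_big /= natr_card_set big_distrl /=; apply: eq_bigr => i _.
have [ti|_] := eqVneq (T0 i) t; last first.
  by rewrite big1 ?(mulr0n, mul0r) // => e _; rewrite /= ?(mulr0n, mul0r, mulr0).
have ij : i != j by apply: contraTneq tj => <-; rewrite ti ltxx.
rewrite /= (@sum_prod_ffun_pair _ _ (fun _ x => rho x) (fun x : bool => x%:R)
   (fun x : bool => x%:R) i j (fun _ => rho1) ij) /=.
by rewrite !mulr1 !mulr0 !addr0 mul1r expr2.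
Qed.

Lemma sum_logrank_term_ge (q : bool -> bool -> R) (dd : nat) j :
  (forall x y, 0 <= q x y) ->
  q true true + q false true + (q true false + q false false) = 1 ->
  t < T0 j -> (#|[set i | T0 i == t]| <= dd)%N ->
  q true true * q false true * #|[set i | T0 i == t]|%:R / (dd%:R + 1) <=
  \sum_(b : {ffun 'I_n -> bool}) \sum_(e : {ffun 'I_n -> bool})
    logrank_term b e * \prod_l q (b l) (e l).
Proof.
move=> q0 q1 tj hdd.
(* kap x y is the conditional probability of the label x given e_i = y. *)
have [kap [kap0 kap1 qE]] := bool_weight_disintegrate q0.
pose rho y := q true y + q false y; pose K := kap true true * kap false true.
have inner (e : {ffun 'I_n -> bool}) :
    \sum_(b : {ffun 'I_n -> bool}) logrank_term b e * \prod_l q (b l) (e l) =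
    (\prod_l rho (e l)) *
    (logrank_weight e * (K * (#|at_risk e|%:R ^+ 2 - #|at_risk e|%:R))).
  rewrite -(sum_labels_card_mul e kap1) !mulr_sumr; apply: eq_bigr => b _.
  rewrite (eq_bigr _ (fun l _ => qE (b l) (e l))) big_split /= /logrank_term; ring.
rewrite exchange_big (eq_bigr _ (fun (e : {ffun _}) _ => inner e)) /=.
have -> : q true true * q false true * #|[set i | T0 i == t]|%:R / (dd%:R + 1) =
    \sum_(e : {ffun 'I_n -> bool}) (\prod_l rho (e l)) *
      (K * (#|failures e|%:R * (e j)%:R / (dd%:R + 1))).
  rewrite (eq_bigr (fun e : {ffun 'I_n -> bool} => K / (dd%:R + 1) *
     ((\prod_l rho (e l)) * (#|failures e|%:R * (e j)%:R)))); last by move=> e _; ring.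
  have qrho x y : q x y = rho y * kap x y := qE x y.
  rewrite -mulr_sumr (sum_card_failures_mul q1 tj) (qrho true true) (qrho false true).
  by rewrite /K; ring.
apply: ler_sum => e _; rewrite ler_wpM2l ?prodr_ge0 ?mulr_ge0 // => [l _|].
  by rewrite addr_ge0.
rewrite [X in _ <= X]mulrCA ler_wpM2l ?mulr_ge0 //.
apply: logrank_weight_ge tj (leq_trans _ hdd).
by apply/subset_leq_card/fintype.subsetP => i; rewrite !inE => /andP[].
Qed.

End LogrankTerm.

Lemma logrank_U_null (R : realType) n (T1 T0 : 'I_n -> R) (z : 'I_n -> bool)
    (c1 c0 : 'I_n -> \bar R) : (forall i, T1 i = T0 i) ->
  logrank_U T1 T0 z c1 c0 = \sum_(t <- undup [seq T0 i | i <- enum 'I_n])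
    logrank_term T0 t z (fun i => (t%:E <= (if z i then c1 i else c0 i))%E).
Proof.
move=> H0; rewrite /logrank_U /=; apply: eq_bigr => t _.
set c := fun i => if z i then c1 i else c0 i.
have riskE i : (t%:E <= Order.min (if z i then T1 i else T0 i)%:E (c i))%E
    = (t <= T0 i) && (t%:E <= c i)%E.
  by rewrite H0 if_same le_min lee_fin.
have failE i : (((if z i then T1 i else T0 i)%:E <= c i)%E &&
    (Order.min (if z i then T1 i else T0 i)%:E (c i) == t%:E))
    = (T0 i == t) && (t%:E <= c i)%E.
  rewrite H0 if_same; case: (leP (T0 i)%:E (c i)) => h /=.
    by rewrite eqe; case: eqP => [<-|].
  apply/esym/negbTE/negP => /andP[/eqP E tc].
  by move: h; rewrite E ltNge tc.
rewrite /logrank_term /logrank_weight -(card_at_risk_split T0 t z) natrD.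
set N1 := #|[set i in _ | z i]|%:R; set N0 := #|[set i in _ | ~~ z i]|%:R.
set D := #|failures _ _ _|%:R.
transitivity (D * (N1 + N0 - D) * N1 * N0 / ((N1 + N0) ^+ 2 * (N1 + N0 - 1)));
  last by ring.
congr (_ * (_ + _ - _) * _ * _ / ((_ + _) ^+ 2 * (_ + _ - 1))).
all: congr (_%:R); rewrite mem_setE; apply: eq_card => i.
all: rewrite !inE /= unfold_in /= ?riskE ?failE //.
all: by rewrite andbC.
Qed.

Lemma card_fiber_le_dtilde (R : realType) n (T0 : 'I_n -> R) t :
  (#|[set i | T0 i == t]| <= dtilde T0)%N.
Proof.
have [i /eqP <-|none] := pickP (fun i => T0 i == t); last first.
  by rewrite (@eq_card0 _ [set i | T0 i == t]) // => i; rewrite inE none.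
apply: leq_trans (leq_bigmax i); rewrite mem_setE.
by apply/eq_leq/eq_card => j; rewrite !inE /= unfold_in.
Qed.

Lemma natr_mul_gtilde (R : realType) n (mu : probability (\bar R * \bar R)%type R)
    (T0 : 'I_n -> R) :
  n%:R * gtilde mu T0 = \sum_i Gtilde mu (T0 i).
Proof.
rewrite /gtilde; case: n T0 => [|m] T0; first by rewrite big_ord0 !mul0r.
by rewrite mulrA mulfV ?mul1r // pnatr_eq0.
Qed.

Section CensoringLaw.
Variables (R : realType) (mu : probability (\bar R * \bar R)%type R).

Definition censor_event (t : R) (x y : bool) : set (\bar R * \bar R) :=
  [set p | (t%:E <= (if x then p.1 else p.2))%E = y]%classic.

Lemma measurable_censor_event t x y : measurable (censor_event t x y).
Proof.
have mS : measurable [set v : \bar R | (t%:E <= v)%E = y]%classic.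
  have mI : measurable `[t%:E, +oo[%classic by exact: emeasurable_itv.
  rewrite set_itvcy in mI; case: y; first exact: mI.
  have -> : [set v : \bar R | (t%:E <= v)%E = false]%classic =
      (~` [set v | (t%:E <= v)%E])%classic.
    by apply/seteqP; split => v /=; case: (t%:E <= v)%E.
  exact: measurableC.
case: x.
- by have := @measurable_fst _ _ (\bar R) (\bar R) measurableT _ mS; rewrite setTI.
- by have := @measurable_snd _ _ (\bar R) (\bar R) measurableT _ mS; rewrite setTI.
Qed.

Lemma censor_event_prob t x y :
  mu (censor_event t x y) = (if y then Gcens mu x t else 1 - Gcens mu x t)%:E.
Proof.
have censT : mu (censor_event t x true) = (Gcens mu x t)%:E.
  by rewrite /Gcens fineK // fin_num_measure //; exact: measurable_censor_event.
case: y => //; have -> : censor_event t x false = (~` censor_event t x true)%classic.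
  by apply/seteqP; split => p /=; rewrite /censor_event /=; case: (t%:E <= _)%E.
by rewrite probability_setC ?censT //; exact: measurable_censor_event.
Qed.

Lemma Gcens_ge0_le1 x t : 0 <= Gcens mu x t <= 1.
Proof.
have G0 : (0 <= mu (censor_event t x true))%E by exact: measure_ge0.
have G1 := probability_le1 mu (measurable_censor_event t x true).
by rewrite censor_event_prob in G0 G1; apply/andP.
Qed.

Lemma Gtilde_ge0_le1 t : 0 <= Gtilde mu t <= 1.
Proof.
have /andP[G10 G11] := Gcens_ge0_le1 true t; have /andP[G00 G01] := Gcens_ge0_le1 false t.
by rewrite mulr_ge0 ?mulr_ile1.
Qed.

Lemma card_fiber_Gtilde_le p1 n (T0 : 'I_n -> R) t : 0 <= p1 <= 1 ->
  #|[set i | T0 i == t]|%:R * (p1 * (1 - p1) * Gtilde mu t / ((dtilde T0)%:R + 1)) <=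
  p1 * (1 - p1).
Proof.
move=> /andP[p0 p1le]; have /andP[G0 G1] := Gtilde_ge0_le1 t.
have dD : #|[set i | T0 i == t]|%:R <= (dtilde T0)%:R :> R.
  by rewrite ler_nat card_fiber_le_dtilde.
set d := #|_|%:R in dD *; set D := (dtilde T0)%:R in dD *.
have D0 : 0 <= D by rewrite /D.
have r1 : d / (D + 1) <= 1 by rewrite ler_pdivrMr ?mul1r; lra.
rewrite (_ : _ * _ = p1 * (1 - p1) * (Gtilde mu t * (d / (D + 1)))); last by ring.
rewrite -[leRHS]mulr1 ler_wpM2l ?mulr_ge0 ?subr_ge0 //.
by rewrite mulr_ile1 ?divr_ge0 ?addr_ge0.
Qed.

(* The law of (Z_i, [t <= C_i]) under Assumptions 1 and 2. *)
Definition cell_prob (p1 t : R) (x y : bool) : R :=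
  (if x then p1 else 1 - p1) * (if y then Gcens mu x t else 1 - Gcens mu x t).

Lemma cell_prob_ge0 p1 t x y : 0 <= p1 <= 1 -> 0 <= cell_prob p1 t x y.
Proof.
move=> /andP[p0 p1le]; have /andP[G0 G1] := Gcens_ge0_le1 x t.
by rewrite mulr_ge0 //; [case: x {G0 G1} | case: y]; rewrite ?subr_ge0.
Qed.

Lemma cell_prob_sum1 p1 t :
  cell_prob p1 t true true + cell_prob p1 t false true +
  (cell_prob p1 t true false + cell_prob p1 t false false) = 1.
Proof. by rewrite /cell_prob /=; ring. Qed.

Lemma sum_cell_logrank_term_ge p1 n (T0 : 'I_n -> R) t j :
  0 <= p1 <= 1 -> t < T0 j ->
  #|[set i | T0 i == t]|%:R * (p1 * (1 - p1) * Gtilde mu t / ((dtilde T0)%:R + 1)) <=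
  \sum_(b : {ffun 'I_n -> bool}) \sum_(e : {ffun 'I_n -> bool})
    logrank_term T0 t b e * \prod_l cell_prob p1 t (b l) (e l).
Proof.
move=> p01 tj; have q0 x y : 0 <= cell_prob p1 t x y by apply: cell_prob_ge0.
apply: le_trans _ (sum_logrank_term_ge q0 (cell_prob_sum1 _ _) tj (card_fiber_le_dtilde T0 t)).
by rewrite /cell_prob /Gtilde /= le_eqVlt; apply/orP; left; apply/eqP; ring.
Qed.

End CensoringLaw.

Section Expectation.
Variables (R : realType) (d : measure_display) (Omega : measurableType d)
  (P : probability Omega R) (n : nat) (p1 : R) (T0 : 'I_n -> R)
  (Z : 'I_n -> Omega -> bool) (C1 C0 : 'I_n -> Omega -> \bar R)
  (mu : probability (\bar R * \bar R)%type R).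
Local Open Scope classical_set_scope.
Hypotheses (mZ : forall i, measurable_fun setT (Z i))
  (mC1 : forall i, measurable_fun setT (C1 i))
  (mC0 : forall i, measurable_fun setT (C0 i))
  (lawP : forall (b : 'I_n -> bool) (B : 'I_n -> set (\bar R * \bar R)%type),
    (forall i, measurable (B i)) ->
    P [set w | forall i, Z i w = b i /\ B i (C1 i w, C0 i w)] =
    (\prod_(i < n) ((if b i then p1 else 1 - p1)%:E * mu (B i)))%E).

Definition cell_event t (b e : 'I_n -> bool) : set Omega :=
  [set w | forall i, Z i w = b i /\ censor_event t (b i) (e i) (C1 i w, C0 i w)].

Lemma measurable_cell_event t b e : measurable (cell_event t b e).
Proof.
have -> : cell_event t b e = \bigcap_(i in [set` enum 'I_n])
    (Z i @^-1` [set b i] `&`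
     (fun w => (C1 i w, C0 i w)) @^-1` censor_event t (b i) (e i)).
  by apply/seteqP; split => w /= h i; [move=> _; exact: h | apply: h; rewrite /= mem_enum].
rewrite bigcap_seq; apply: bigsetI_measurable => i _; apply: measurableI.
- by have := mZ i measurableT (Y := [set b i]) I; rewrite setTI.
- have := measurable_fun_pair (mC1 i) (mC0 i) measurableT
    (measurable_censor_event t (b i) (e i)).
  by rewrite setTI.
Qed.

Lemma cell_event_prob t b e :
  P (cell_event t b e) = (\prod_i cell_prob mu p1 t (b i) (e i))%:E.
Proof.
rewrite /cell_event (@lawP b (fun i => censor_event t (b i) (e i))); last first.
  by move=> i; exact: measurable_censor_event.
by rewrite -prodEFin; apply: eq_bigr => i _; rewrite censor_event_prob -EFinM.
Qed.

Lemma logrank_term_indicE t w :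
  logrank_term T0 t (fun i => Z i w)
    (fun i => (t%:E <= (if Z i w then C1 i w else C0 i w))%E) =
  \sum_(b : {ffun 'I_n -> bool}) \sum_(e : {ffun 'I_n -> bool})
    logrank_term T0 t b e * \1_(cell_event t b e) w.
Proof.
pose bw := [ffun i => Z i w].
pose ew := [ffun i => (t%:E <= (if Z i w then C1 i w else C0 i w))%E].
rewrite pair_big (bigD1 (bw, ew)) //= big1 ?addr0.
  rewrite indicE mem_set ?mulr1; last by move=> i; rewrite !ffunE.
  by congr logrank_term; apply: funext => i; rewrite ffunE.
move=> [b e] /= neq; rewrite indicE memNset ?mulr0 // => wA; move/negP: neq; apply.
have -> : b = bw by apply/ffunP => i; rewrite ffunE; have [-> _] := wA i.
apply/eqP; congr pair; apply/ffunP => i; rewrite ffunE.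
by have [Zi] := wA i; rewrite /censor_event /= Zi => ->.
Qed.

Lemma integral_logrank_term_indic t b e :
  (\int[P]_w (logrank_term T0 t b e * \1_(cell_event t b e) w)%:E =
   (logrank_term T0 t b e * \prod_i cell_prob mu p1 t (b i) (e i))%:E)%E.
Proof.
rewrite (@integralZl_indic _ _ _ _ _ measurableT (fun _ : R => cell_event t b e)) //;
  try exact: measurable_cell_event.
- rewrite integral_indic ?setIT //; last exact: measurable_cell_event.
  (* the goal sees P through its measure coercion, which cell_event_prob does not match *)
  transitivity ((logrank_term T0 t b e)%:E * P (cell_event t b e))%E => //.
  by rewrite cell_event_prob EFinM.
- by move=> /lt_geF; rewrite logrank_term_ge0.
Qed.

Lemma expectation_logrank_U_null (T1 : 'I_n -> R) : (forall i, T1 i = T0 i) ->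
  (\int[P]_w (logrank_U T1 T0 (fun i => Z i w) (fun i => C1 i w)
                           (fun i => C0 i w))%:E =
   (\sum_(t <- undup [seq T0 i | i <- enum 'I_n])
      \sum_(b : {ffun 'I_n -> bool}) \sum_(e : {ffun 'I_n -> bool})
        logrank_term T0 t b e * \prod_i cell_prob mu p1 t (b i) (e i))%:E)%E.
Proof.
move=> H0.
pose f t (b e : {ffun 'I_n -> bool}) w := (logrank_term T0 t b e * \1_(cell_event t b e) w)%:E.
have f_ge0 t b e w : (0 <= f t b e w)%E.
  by rewrite lee_fin mulr_ge0 ?logrank_term_ge0 // indicE ler0n.
have mf t b e : measurable_fun setT (f t b e).
  apply/measurable_EFinP/measurable_funM; first exact: measurable_cst.
  exact/measurable_indic/measurable_cell_event.
rewrite (eq_integral (fun w => \sum_(t <- undup [seq T0 i | i <- enum 'I_n])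
   \sum_(b : {ffun 'I_n -> bool}) \sum_(e : {ffun 'I_n -> bool}) f t b e w)); last first.
  move=> w _; rewrite logrank_U_null // -sumEFin; apply: eq_bigr => t _.
  by rewrite logrank_term_indicE -sumEFin; apply: eq_bigr => b _; rewrite -sumEFin.
rewrite ge0_integral_sum //; first last.
- by move=> t w _; apply: sume_ge0 => b _; apply: sume_ge0 => e _; exact: f_ge0.
- by move=> t; apply: emeasurable_sum => b; apply: emeasurable_sum => e; exact: mf.
rewrite -sumEFin; apply: eq_bigr => t _.
rewrite ge0_integral_sum //; first last.
- by move=> b w _; apply: sume_ge0 => e _; exact: f_ge0.
- by move=> b; apply: emeasurable_sum => e; exact: mf.
rewrite -sumEFin; apply: eq_bigr => b _.
rewrite ge0_integral_sum //.
by rewrite -sumEFin; apply: eq_bigr => e _; exact: integral_logrank_term_indic.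
Qed.

End Expectation.

Local Open Scope classical_set_scope.

Theorem lemmaA7 (R : realType) (d : measure_display) (Omega : measurableType d)
    (P : probability Omega R) (n : nat) (p1 : R) (T1 T0 : 'I_n -> R)
    (Z : 'I_n -> Omega -> bool) (C1 C0 : 'I_n -> Omega -> \bar R)
    (mu : probability (\bar R * \bar R)%type R) :
  0 < p1 < 1 ->
  (forall i, 0 <= T1 i) -> (forall i, 0 <= T0 i) ->
  (forall i, measurable_fun setT (Z i)) ->
  (forall i, measurable_fun setT (C1 i)) ->
  (forall i, measurable_fun setT (C0 i)) ->
  (forall i w, (0 <= C1 i w)%E) -> (forall i w, (0 <= C0 i w)%E) ->
  (* Assumptions 1 and 2: the law of (Z_i, (C_i(1), C_i(0)))_i is
     (Bernoulli(p1) (x) mu)^{(x) n} *)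
  (forall (b : 'I_n -> bool) (B : 'I_n -> set (\bar R * \bar R)%type),
      (forall i, measurable (B i)) ->
      P [set w | forall i, Z i w = b i /\ B i (C1 i w, C0 i w)] =
      (\prod_(i < n) ((if b i then p1 else 1 - p1)%:E * mu (B i)))%E) ->
  (* null hypothesis H0 *)
  (forall i, T1 i = T0 i) ->
  ((p1 * (1 - p1) * (n%:R * gtilde mu T0 / ((dtilde T0)%:R + 1) - 1))%:E
    <= \int[P]_w (logrank_U T1 T0 (fun i => Z i w) (fun i => C1 i w)
                             (fun i => C0 i w))%:E)%E.
Proof.
move=> /andP[p1_gt0 p1_lt1] _ _ mZ mC1 mC0 _ _ lawP H0.
have p01 : 0 <= p1 <= 1 by rewrite !ltW.
rewrite (expectation_logrank_U_null mZ mC1 mC0 lawP H0) lee_fin.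
pose a t := #|[set i | T0 i == t]%SET|%:R *
  (p1 * (1 - p1) * Gtilde mu t / ((dtilde T0)%:R + 1)).
have -> : p1 * (1 - p1) * (n%:R * gtilde mu T0 / ((dtilde T0)%:R + 1) - 1) =
    \sum_(t <- undup [seq T0 i | i <- enum 'I_n]) a t - p1 * (1 - p1).
  by rewrite /a sum_undup_fibers natr_mul_gtilde -mulr_suml -mulr_sumr; ring.
apply: sum_sub_max_le.
- exact: undup_uniq.
- by rewrite mulr_ge0 ?subr_ge0 // ltW.
- by move=> t _; exact: card_fiber_Gtilde_le p01.
- move=> t _; apply: sumr_ge0 => b _; apply: sumr_ge0 => e _.
  by rewrite mulr_ge0 ?logrank_term_ge0 ?prodr_ge0 // => i _; exact: cell_prob_ge0.
move=> t _ /hasP[_ /[!mem_undup] /mapP[j _ ->] tj].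
exact: sum_cell_logrank_term_ge p01 tj.
Qed.
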